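(* Let $p$ be a prime and $a,b,c$ positive integers such that $c$ is a primitive divisor of $p^a-1$, and put $u=\tfrac{p^a-1}{c}$. Then the following are equivalent: (i) $bc$ is a primitive divisor of $p^{ab}-1$; (ii) $bc\mid p^{ab}-1$ and $bc\nmid p^{a\ell}-1$ for all $1\le \ell\le b-1$; (iii) $b\mid u\,\Psi_b(p^a)$ and $b\nmid u\,\Psi_\ell(p^a)$ for all $1\le\ell\le b-1$.
   Context: An integer $e$ is a primitive divisor of $p^a-1$ if $e\mid p^a-1$ and $e\nmid p^t-1$ for every $1\le t<a$. For a positive integer $t$, $\Psi_t(x)=x^{t-1}+\cdots+x+1$. *)

From mathcomp Require Import all_boot.
Set Implicit Arguments. Unset Strict Implicit. Unset Printing Implicit Defensive.

Definition primitive_divisor (e p a : nat) : Prop :=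
  e %| p ^ a - 1 /\ forall t, 1 <= t -> t < a -> ~~ (e %| p ^ t - 1).

Definition Psi (t x : nat) : nat := \sum_(i < t) x ^ i.

(* Since c is a primitive divisor of p^a - 1, the multiplicative order of p
   modulo c is exactly a, so any multiple of c dividing p^t - 1 forces a | t;
   hence in the definition of a primitive divisor of p^(ab) - 1 only the
   exponents t = a l need to be tested, which gives (i) <-> (ii).  Writing
   p^(al) - 1 = (p^a - 1) Psi_l(p^a) = c u Psi_l(p^a) and cancelling c gives
   (ii) <-> (iii). *)
From mathcomp Require Import all_boot zify.

Lemma dvdn_subn1_expn_mod (c p a t : nat) : 0 < p ->
  c %| p ^ a - 1 -> c %| p ^ t - 1 -> c %| p ^ (t %% a) - 1.
Proof.
move=> p_gt0 dvd_a dvd_t.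
have exp_gt0 k : 0 < p ^ k by rewrite expn_gt0 p_gt0.
have pa_mod : p ^ a = 1 %[mod c] by apply/eqP; rewrite eqn_mod_dvd.
have pt_mod : p ^ t = 1 %[mod c] by apply/eqP; rewrite eqn_mod_dvd.
rewrite -eqn_mod_dvd //; apply/eqP; rewrite -pt_mod.
have -> : p ^ t = p ^ (t %% a) * (p ^ a) ^ (t %/ a).
  by rewrite -expnM -expnD [a * _]mulnC addnC -divn_eq.
by rewrite -modnMmr -(modnXm _ c (p ^ a)) pa_mod modnXm exp1n modnMmr muln1.
Qed.

Lemma primitive_divisor_dvd_expn (c p a t : nat) : 0 < p -> 0 < a ->
  primitive_divisor c p a -> c %| p ^ t - 1 -> a %| t.
Proof.
move=> p_gt0 a_gt0 [dvd_a prim] dvd_t; rewrite /dvdn.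
apply: contraT => t_mod_a.
have := prim (t %% a); rewrite lt0n t_mod_a ltn_pmod //.
by rewrite dvdn_subn1_expn_mod // => /(_ isT isT).
Qed.

Lemma primitive_divisor_mulnE (c e p a b : nat) : 0 < p -> 0 < a ->
  primitive_divisor c p a -> c %| e ->
  primitive_divisor e p (a * b) <->
  e %| p ^ (a * b) - 1 /\
  forall l, 1 <= l -> l <= b - 1 -> ~~ (e %| p ^ (a * l) - 1).
Proof.
move=> p_gt0 a_gt0 prim_c dvd_ce; split=> -[dvd_ab prim_e]; split=> //.
  by move=> l l_gt0 l_lt; apply: prim_e; rewrite ?muln_gt0 ?ltn_pmul2l //; lia.
move=> t t_gt0 t_lt; apply/negP => dvd_t.
have /dvdnP[l t_al] : a %| t.
  exact: primitive_divisor_dvd_expn prim_c (dvdn_trans dvd_ce dvd_t).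
have l_gt0 : 0 < l by move: t_gt0; rewrite t_al muln_gt0 => /andP[].
have l_lt : l < b by rewrite -(ltn_pmul2r a_gt0) [b * a]mulnC -t_al.
have l_le : l <= b - 1 by lia.
by move: (prim_e l l_gt0 l_le); rewrite mulnC -t_al dvd_t.
Qed.

Lemma subn1_expn_Psi (q l : nat) : q ^ l - 1 = (q - 1) * Psi l q.
Proof. by rewrite !subn1 predn_exp. Qed.

Lemma dvdn_mul_subn1_expnM (b c p a l : nat) : 0 < c -> c %| p ^ a - 1 ->
  (b * c %| p ^ (a * l) - 1) = (b %| (p ^ a - 1) %/ c * Psi l (p ^ a)).
Proof.
move=> c_gt0 dvd_a.
by rewrite expnM subn1_expn_Psi -{1}(divnK dvd_a) mulnAC dvdn_pmul2r.
Qed.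

Theorem mainTheorem4 (p a b c : nat) :
  prime p -> 0 < a -> 0 < b -> 0 < c ->
  primitive_divisor c p a ->
  let u := (p ^ a - 1) %/ c in
  [/\ (primitive_divisor (b * c) p (a * b) <->
        (b * c %| p ^ (a * b) - 1 /\
         forall l, 1 <= l -> l <= b - 1 -> ~~ (b * c %| p ^ (a * l) - 1))),
      ((b * c %| p ^ (a * b) - 1 /\
         forall l, 1 <= l -> l <= b - 1 -> ~~ (b * c %| p ^ (a * l) - 1)) <->
       (b %| u * Psi b (p ^ a) /\
         forall l, 1 <= l -> l <= b - 1 -> ~~ (b %| u * Psi l (p ^ a))))
    & (primitive_divisor (b * c) p (a * b) <->
       (b %| u * Psi b (p ^ a) /\
         forall l, 1 <= l -> l <= b - 1 -> ~~ (b %| u * Psi l (p ^ a))))].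
Proof.
move=> p_prime a_gt0 _ c_gt0 prim_c u.
have i_ii := primitive_divisor_mulnE c (b * c) p a b (prime_gt0 p_prime) a_gt0 prim_c
  (dvdn_mull b (dvdnn c)).
have ii_iii : (b * c %| p ^ (a * b) - 1 /\
    forall l, 1 <= l -> l <= b - 1 -> ~~ (b * c %| p ^ (a * l) - 1)) <->
  (b %| u * Psi b (p ^ a) /\
    forall l, 1 <= l -> l <= b - 1 -> ~~ (b %| u * Psi l (p ^ a))).
  have key l := dvdn_mul_subn1_expnM b c p a l c_gt0 prim_c.1.
  split=> -[dvd_b not_dvd]; split=> [|l l_gt0 l_lt].
  - by rewrite -key.
  - by rewrite -key; apply: not_dvd.
  - by rewrite key.
  - by rewrite key; apply: not_dvd.
by split=> //; apply: iff_trans i_ii ii_iii.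
Qed.
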